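(* Let $q$ be a prime power, let $C\subseteq\mathbb{F}_q^n$ be an $[n,k]_q$ linear code, and let $t\in\mathbb{N}$. Then \[ \log_{q^t} \left(V_{q^t,n,R_t(C)}\right) \geq n-k. \]
   Context: An $[n,k]_q$ code is a $k$-dimensional subspace of $\mathbb{F}_q^n$. For a $t\times n$ matrix $\mathbf{v}$ over $\mathbb{F}_q$ with rows $\overline{v}_1,\dots,\overline{v}_t$, $\mathrm{wt}^{(t)}(\mathbf{v})=\left|\bigcup_{i} \mathrm{supp}(\overline{v}_i)\right|$ and $d^{(t)}(\mathbf{u},\mathbf{v})=\mathrm{wt}^{(t)}(\mathbf{u}-\mathbf{v})$. $C^t$ is the set of $t\times n$ matrices over $\mathbb{F}_q$ all of whose rows lie in $C$, and the $t$-th generalized covering radius $R_t(C)$ is the smallest integer $\rho$ such that for every $\mathbf{v}\in\mathbb{F}_q^{t\times n}$ some $\mathbf{c}\in C^t$ has $d^{(t)}(\mathbf{v},\mathbf{c})\le\rho$. $V_{Q,n,r}=\sum_{i=0}^r\binom{n}{i}(Q-1)^i$. *)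

From HB Require Import structures.
From mathcomp Require Import all_boot all_order all_algebra all_field.
From mathcomp Require Import reals exp.
Set Implicit Arguments. Unset Strict Implicit. Unset Printing Implicit Defensive.
Import Order.TTheory GRing.Theory Num.Theory.

Section Covering.
Variables (F : finFieldType) (n t : nat).

Definition gwt (v : 'M[F]_(t, n)) : nat :=
  #|[set j : 'I_n | [exists i : 'I_t, v i j != 0%R]]|.

Definition gdist (u v : 'M[F]_(t, n)) : nat := gwt (u - v)%R.

Definition in_Ct (C : {vspace 'rV[F]_n}) (c : 'M[F]_(t, n)) : bool :=
  [forall i : 'I_t, (row i c \in C)%VS].

Definition gcovers (C : {vspace 'rV[F]_n}) (rho : nat) : bool :=
  [forall v : 'M[F]_(t, n), [exists c : 'M[F]_(t, n), in_Ct C c && (gdist v c <= rho)]].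

Lemma gcovers_n (C : {vspace 'rV[F]_n}) : exists rho, gcovers C rho.
Proof.
exists n; apply/forallP => v; apply/existsP; exists 0%R.
apply/andP; split.
  by apply/forallP => i; rewrite row0 mem0v.
rewrite /gdist /gwt; apply: leq_trans (max_card _) _.
by rewrite card_ord.
Qed.

Definition gcov_radius (C : {vspace 'rV[F]_n}) : nat := ex_minn (gcovers_n C).

End Covering.

Definition Vball (Q n r : nat) : nat := \sum_(i < r.+1) 'C(n, i) * (Q - 1) ^ i.

(** A sphere-covering argument: every [t x n] matrix is at generalized
    distance at most [R_t(C)] from some [c] in [C^t], so [v |-> (c, v - c)]
    injects [F^(t x n)] into [C^t] times the generalized ball of radius
    [R_t(C)].  Reading a matrix column by column identifies the generalized
    weight with the Hamming weight over the alphabet [F^t] of size [q^t], so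
    that ball has at most [V_{q^t,n,R_t(C)}] elements, while [|C^t| = q^(kt)].
    Hence [q^(tn) <= q^(kt) V], and taking logarithms gives the bound. *)

From HB Require Import structures.
From mathcomp Require Import all_boot all_order all_algebra all_field.
From mathcomp Require Import reals exp.
Set Implicit Arguments. Unset Strict Implicit. Unset Printing Implicit Defensive.
Import Order.TTheory GRing.Theory Num.Theory.

Lemma card_ffun_support (aT bT : finType) (z : bT) (S : {set aT}) :
  #|[set f : {ffun aT -> bT} | [set x | f x != z] == S]| = (#|bT| - 1) ^ #|S|.
Proof.
rewrite subn1 -(cardC1 z) -(card_pffun_on z S (predC1 z)).
apply: eq_card => f; rewrite inE; apply/eqP/pffun_onP => [<- | [supp img]].
  split; first by apply/subsetP => x; rewrite !inE.
  by move=> y /imageP[x]; rewrite inE => fx ->; rewrite !inE.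
apply/setP => x; rewrite inE; apply/idP/idP => [fx | xS].
  by apply: (subsetP supp); rewrite inE.
by have := img (f x) (image_f f xS); rewrite !inE.
Qed.

Lemma card_ffun_ball (aT bT : finType) (z : bT) (r : nat) :
  #|[set f : {ffun aT -> bT} | #|[set x | f x != z]| <= r]| =
  \sum_(i < r.+1) 'C(#|aT|, i) * (#|bT| - 1) ^ i.
Proof.
rewrite -sum1_card.
rewrite (partition_big (fun f : {ffun aT -> bT} => [set x | f x != z])
                       (fun S : {set aT} => #|S| <= r)); last by move=> f; rewrite inE.
rewrite (eq_bigr (fun S : {set aT} => (#|bT| - 1) ^ #|S|)); last first.
  move=> S Sr; rewrite -(card_ffun_support z) -sum1_card; apply: eq_bigl => f.
  by rewrite !inE andb_idl // => /eqP ->.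
rewrite (partition_big (fun S : {set aT} => inord #|S| : 'I_r.+1) xpredT) //.
apply: eq_bigr => i _.
rewrite (eq_bigl (fun S : {set aT} => #|S| == i)); last first.
  move=> S; apply/andP/eqP => [[Sr /eqP <-] | Si]; first by rewrite inordK.
  by rewrite Si -ltnS ltn_ord inord_val.
rewrite (eq_bigr (fun _ => (#|bT| - 1) ^ i)) => [|S /eqP -> //].
rewrite sum_nat_const -card_draws; congr (_ * _).
by apply: eq_card => S; rewrite inE.
Qed.

Lemma expn_le_ln_div (R : realType) (b m v : nat) :
  1 < b -> b ^ m <= v -> (m%:R <= ln (v%:R : R) / ln (b%:R : R))%R.
Proof.
move=> b_gt1 bmv; have b_gt0 := ltnW b_gt1.
rewrite ler_pdivlMr ?ln_gt0 ?ltr1n // mulr_natl -lnXn ?ltr0n // -natrX.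
rewrite ler_ln ?posrE ?ltr0n ?expn_gt0 ?b_gt0 ?ler_nat //.
by apply: leq_trans bmv; rewrite expn_gt0 b_gt0.
Qed.

Section GeneralizedCovering.
Variables (F : finFieldType) (n t : nat).
Implicit Types (C : {vspace 'rV[F]_n}) (v : 'M[F]_(t, n)).

Lemma gwt_col v : gwt v = #|[set j | col j v != 0%R]|.
Proof.
apply: eq_card => j; rewrite !inE; apply/idP/idP => [/existsP[i vij] | ].
  by apply: contraNneq vij => /colP/(_ i); rewrite !mxE => ->.
apply: contraNT => /existsPn vj0; apply/eqP/colP => i.
by rewrite !mxE; apply/eqP/negPn.
Qed.

Lemma card_Ct_le C : #|[set c : 'M[F]_(t, n) | in_Ct C c]| <= #|C| ^ t.
Proof.
pose rows (c : 'M[F]_(t, n)) := [ffun i => row i c].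
have rows_inj : injective rows.
  move=> a b /ffunP eab; apply/matrixP => i j.
  by have := eab i; rewrite !ffunE => /rowP/(_ j); rewrite !mxE.
rewrite -(card_imset _ rows_inj) -[t in _ ^ t]card_ord -card_ffun_on.
apply/subset_leq_card/subsetP => y /imsetP[c]; rewrite inE => /forallP Cc ->.
by apply/ffun_onP => i; rewrite ffunE Cc.
Qed.

Lemma card_gwt_ball_le r :
  #|[set e : 'M[F]_(t, n) | gwt e <= r]| <= Vball (#|F| ^ t) n r.
Proof.
pose cols (e : 'M[F]_(t, n)) := [ffun j => col j e].
have cols_inj : injective cols.
  move=> a b /ffunP eab; apply/matrixP => i j.
  by have := eab j; rewrite !ffunE => /colP/(_ i); rewrite !mxE.
rewrite /Vball -[in X in _ <= X](card_ord n) -[t in _ ^ t]muln1 -card_mx.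
rewrite -(card_ffun_ball _ 0%R) -(card_imset _ cols_inj).
apply/subset_leq_card/subsetP => y /imsetP[e]; rewrite !inE gwt_col => e_r ->.
by apply: leq_trans e_r; apply/subset_leq_card/subsetP => j; rewrite !inE ffunE.
Qed.

Lemma gcovers_gcov_radius C : gcovers t C (gcov_radius t C).
Proof. by rewrite /gcov_radius; case: ex_minnP. Qed.

Lemma card_mx_le_gcovers C r :
  gcovers t C r -> #|F| ^ (t * n) <= #|C| ^ t * Vball (#|F| ^ t) n r.
Proof.
move=> /forallP cov.
have near v : exists c, in_Ct C c && (gdist v c <= r) by apply/existsP.
pose center v := xchoose (near v).
have center_near v : in_Ct C (center v) && (gdist v (center v) <= r).
  exact: (xchooseP (near v)).
pose decompose v := (center v, v - center v)%R.
have decompose_inj : injective decompose.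
  by move=> a b [ca cb]; rewrite -[a](subrK (center a)) cb ca subrK.
rewrite -card_mx -cardsT -(card_imset _ decompose_inj).
apply: leq_trans (leq_mul (card_Ct_le C) (card_gwt_ball_le r)).
rewrite -cardsX; apply/subset_leq_card/subsetP => y /imsetP[v _ ->].
by rewrite !inE; case/andP: (center_near v) => ->.
Qed.

Lemma sphere_covering_bound C r :
  gcovers t C r -> (#|F| ^ t) ^ (n - \dim C) <= Vball (#|F| ^ t) n r.
Proof.
move=> /card_mx_le_gcovers; rewrite card_vspace -expnM (mulnC _ t) => count.
have dimC_le : \dim C <= n.
  by have := dimvS (subvf C); rewrite dimvf /dim /= mul1n.
have F_gt0 : 0 < #|F| := ltnW (card_finNzRing_gt1 F).
rewrite -(@leq_pmul2r (#|F| ^ (t * \dim C))) ?expn_gt0 ?F_gt0 //.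
by rewrite -expnM -expnD -mulnDr subnK // (mulnC (Vball _ _ _)).
Qed.

End GeneralizedCovering.

Theorem lemma7 (R : realType) (F : finFieldType) (n k t : nat)
  (C : {vspace 'rV[F]_n}) (hk : \dim C = k) (ht : (0 < t)%N) :
  let q := #|F| in
  ((n - k)%:R <= ln ((Vball (q ^ t) n (gcov_radius t C))%:R : R)
                 / ln ((q ^ t)%:R : R))%R.
Proof.
apply: expn_le_ln_div.
  by rewrite -(expn0 #|F|) ltn_exp2l ?card_finNzRing_gt1.
by rewrite -hk sphere_covering_bound ?gcovers_gcov_radius.
Qed.
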